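(* Let $V$ be a finite set of variables, let $D_{\mathit{dag}}$ be the ABA framework defined in the context, and let $\sigma\in\{\text{preferred},\text{stable}\}$. Then each directed acyclic graph $G$ with node set $V$ corresponds to a unique $S\in\sigma(D_{\mathit{dag}})$ and vice versa, where $S$ corresponds to the graph $(V,\{(x,y)\mid \mathit{arr}_{xy}\in S\})$.
   Context: Assumption-based argumentation (ABA). An ABA framework is a tuple $D=(\mathcal L,\mathcal R,\mathcal A,\overline{\cdot})$ with sentences $\mathcal L$, rules $\mathcal R$ of the form $a_0\leftarrow a_1,\dots,a_n$ ($n\ge0$), assumptions $\mathcal A\subseteq\mathcal L$ and contrary function $\overline{\cdot}:\mathcal A\to\mathcal L$. For $S\subseteq\mathcal A$, $S\vdash q$ if there is a finite rooted labelled tree with root $q$, set of leaf labels $S$ or $S\cup\{\top\}$, and every inner node labelled by the head of some rule whose children are labelled by the distinct body elements of that rule (a single child $\top$ for an empty body). $S$ attacks $T$ if some $S'\subseteq S$ derives $\overline a$ for some $a\in T$. $S$ is conflict-free if it does not attack itself; it defends $T$ if it attacks every attacker of $T$; admissible if conflict-free and self-defending; complete if admissible and contains every assumption set it defends; preferred if $\subseteq$-maximal complete; stable if admissible and it attacks $\{a\}$ for every assumption $a\notin S$. The framework $D_{\mathit{dag}}$: for a finite set $V$, assumptions are $\mathit{arr}_{xy}$ for all ordered pairs $x\ne y$ in $V$ and one assumption $\mathit{noe}_{xy}=\mathit{noe}_{yx}$ per unordered pair of distinct variables; each assumption $a$ has its own distinct fresh contrary $\overline a$; rules are (i) $\overline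 a\leftarrow b$ for all distinct $a,b\in\{\mathit{arr}_{xy},\mathit{arr}_{yx},\mathit{noe}_{xy}\}$; (ii) for every sequence $x_1\dots x_k$ of variables with consecutive elements distinct and $x_1=x_k$, and every $1\le i<k$, the rule $\overline{\mathit{arr}_{x_ix_{i+1}}}\leftarrow\mathit{arr}_{x_1x_2},\dots,\mathit{arr}_{x_{k-1}x_k}$. *)

From Stdlib Require List.
From HB Require Import structures.
From mathcomp Require Import all_boot.
Set Implicit Arguments.
Unset Strict Implicit.
Unset Printing Implicit Defensive.

(* Sentences form an eqType; the
   assumptions are a finite type embedded into the sentences by [asm_sent]
   (A is a subset of L); [contrary] is the contrary function; [rule h b]
   means that  h <- b  is a rule of R (b the list of body elements). *)
Record ABA := {
  sent : eqType;
  asm : finType;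
  asm_sent : asm -> sent;
  contrary : asm -> sent;
  rule : sent -> seq sent -> Prop
}.

(* Finite rooted labelled trees; [Top] is the special label  T  used as the
   unique child of a node whose rule has empty body. *)
Inductive dtree (L : Type) :=
  | Top : dtree L
  | Nd : L -> seq (dtree L) -> dtree L.
Arguments Top {L}.

Definition droot (L : Type) (t : dtree L) : option L :=
  match t with Top => None | Nd x _ => Some x end.

Section Deriv.
Variable D : ABA.
Notation L := (sent D).

Inductive valid_tree : dtree L -> Prop :=
  | vt_top : valid_tree Top
  | vt_leaf x : valid_tree (Nd x [::])
  | vt_node x (ch : seq (dtree L)) (body : seq L) :
      ch <> [::] ->
      @rule D x body ->
      ((body = [::] /\ ch = [:: Top]) \/
       (body <> [::] /\ perm_eq (map (@droot L) ch) (map Some (undup body)))) ->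
      (forall c, List.In c ch -> valid_tree c) ->
      valid_tree (Nd x ch).

Inductive leaf_label : dtree L -> L -> Prop :=
  | ll_here x : leaf_label (Nd x [::]) x
  | ll_child x ch c y : List.In c ch -> leaf_label c y -> leaf_label (Nd x ch) y.

(* S |- q : a tree with root q whose set of leaf labels is S or S u {T}. *)
Definition derives (S : {set asm D}) (q : L) : Prop :=
  exists t : dtree L, [/\ valid_tree t, droot t = Some q &
    forall y : L, leaf_label t y <-> exists2 a, a \in S & asm_sent a = y].

Definition attacks (S T : {set asm D}) : Prop :=
  exists S' : {set asm D}, exists a : asm D,
    [/\ S' \subset S, a \in T & derives S' (contrary a)].

Definition conflict_free (S : {set asm D}) : Prop := ~ attacks S S.

Definition defends (S T : {set asm D}) : Prop :=
  forall U : {set asm D}, attacks U T -> attacks S U.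

Definition admissible (S : {set asm D}) : Prop :=
  conflict_free S /\ defends S S.

Definition complete (S : {set asm D}) : Prop :=
  admissible S /\ forall T : {set asm D}, defends S T -> T \subset S.

Definition preferred (S : {set asm D}) : Prop :=
  complete S /\ forall T : {set asm D}, complete T -> S \subset T -> T = S.

Definition stable (S : {set asm D}) : Prop :=
  admissible S /\ forall a : asm D, a \notin S -> attacks S [set a].

End Deriv.

Inductive semantics := Preferred | Stable.

Definition extension (sg : semantics) (D : ABA) (S : {set asm D}) : Prop :=
  match sg with
  | Preferred => preferred S
  | Stable => stable S
  end.

Section Ddag.
Variable V : finType.

(* raw assumption codes: inl (x,y) = arr_xy, inr e = noe_e (e = {x,y}) *)
Definition raw_asm := ((V * V) + {set V})%type.

Definition ok_asm (r : raw_asm) : bool :=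
  match r with
  | inl (x, y) => x != y
  | inr e => #|e| == 2
  end.

(* assumptions: arr_xy for ordered pairs x != y, one noe per unordered pair *)
Definition dag_asm : finType := {r : raw_asm | ok_asm r}.

(* sentences: assumptions (inl a) and their distinct fresh contraries (inr a) *)
Definition dag_sent : eqType := (dag_asm + dag_asm)%type.

Definition pair_of (a : dag_asm) : {set V} :=
  match val a with
  | inl (x, y) => [set x; y]
  | inr e => e
  end.

(* code of a sentence: (is_contrary, raw assumption code) *)
Definition code (s : dag_sent) : bool * raw_asm :=
  match s with inl a => (false, val a) | inr a => (true, val a) end.

Definition dag_rule (h : dag_sent) (body : seq dag_sent) : Prop :=
  (* (i) contrary(a) <- b  for distinct a, b in {arr_xy, arr_yx, noe_xy} *)
  (exists a b : dag_asm,
      [/\ a != b, pair_of a = pair_of b, h = inr a & body = [:: inl b]])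
  \/
  (* (ii) cycles x_1 ... x_k, x_1 = x_k, consecutive distinct, 1 <= i < k:
          contrary(arr_{x_i x_{i+1}}) <- arr_{x_1 x_2}, ..., arr_{x_{k-1} x_k} *)
  (exists (x1 : V) (rest : seq V) (i : nat),
      let s := x1 :: rest in
      [/\ last x1 rest = x1,
          (forall j, j.+1 < size s -> nth x1 s j != nth x1 s j.+1),
          i.+1 < size s,
          code h = (true, inl (nth x1 s i, nth x1 s i.+1)) &
          map code body =
            [seq (false, inl (nth x1 s j, nth x1 s j.+1)) | j <- iota 0 (size s).-1]]).

Definition D_dag : ABA :=
  {| sent := dag_sent; asm := dag_asm; asm_sent := inl; contrary := inr;
     rule := dag_rule |}.

Definition graph_of (S : {set dag_asm}) : rel V :=
  fun x y => [exists a in S, val a == inl (x, y)].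

End Ddag.

(* a directed graph on the finite node set V, given by its edge relation, is
   acyclic iff there is no directed cycle (of length >= 1, so no self-loops) *)
Definition acyclic (V : finType) (G : rel V) : Prop :=
  forall x y : V, G x y -> ~~ connect G y x.

(* In D_dag every rule has a contrary as head and assumptions as body, so a
   derivation is a single rule application and S attacks T exactly when some
   a in T either meets a different assumption of S about the same pair {x,y}
   (rules (i)), or is an arrow of S closing a directed cycle of the graph of S
   (rules (ii)).  Hence S is stable iff it holds at most one and at least one
   assumption per pair and its graph is acyclic; such an S is determined by its
   graph, the pairs without an arrow carrying noe.  A preferred S is
   conflict-free, so adding noe_xy for every pair S does not mention gives a
   stable superset, which equals S by maximality. *)

From mathcomp Require Import all_boot.
From Stdlib Require List.
Set Implicit Arguments.
Unset Strict Implicit.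
Unset Printing Implicit Defensive.

Lemma InP (T : eqType) (x : T) (s : seq T) : reflect (List.In x s) (x \in s).
Proof.
elim: s => [|y s IH]; first by constructor.
rewrite inE; apply: (iffP orP) => [[/eqP ->|/IH]|[->|/IH]];
  by [left|right|left|right].
Qed.

Lemma undup_map_nil (T : eqType) (U : Type) (f : T -> U) (s : seq T) :
  s <> [::] -> map f (undup s) <> [::].
Proof. by move=> sn; case Eu: (undup _) => // _; apply/sn/undup_nil. Qed.

Lemma connect_nth (T : finType) (e : rel T) (x0 : T) (s : seq T) :
  (forall j, j.+1 < size s -> e (nth x0 s j) (nth x0 s j.+1)) ->
  forall j k, j <= k < size s -> connect e (nth x0 s j) (nth x0 s k).
Proof.
move=> es j; elim=> [|k IHk]; first by rewrite leqn0 => /andP [/eqP ->].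
case/andP; rewrite leq_eqVlt => /orP [/eqP -> //|jk ks].
apply: connect_trans (IHk _) (connect1 (es _ ks)).
by apply/andP; split; [exact: jk | exact: ltnW].
Qed.

Lemma eq_acyclic (T : finType) (e e' : rel T) : e =2 e' -> acyclic e -> acyclic e'.
Proof. by move=> ee' acyc x y; rewrite -ee' -(eq_connect ee'); apply: acyc. Qed.

Lemma acyclic_irreflexive (T : finType) (e : rel T) : acyclic e -> irreflexive e.
Proof.
by move=> acyc x; apply/negbTE/negP => exx; move: (acyc x x exx); rewrite connect0.
Qed.

Section AttackSemantics.
Variable D : ABA.
Implicit Types S T : {set asm D}.

Lemma attacks_mono S1 S2 T1 T2 : S1 \subset S2 -> T1 \subset T2 ->
  attacks S1 T1 -> attacks S2 T2.
Proof.
move=> sS12 sT12 [S' [a [sS'S1 aT1 der]]]; exists S', a; split=> //.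
  exact: subset_trans sS12.
exact: subsetP aT1.
Qed.

Lemma attacks_outside_stable S : conflict_free S ->
  (forall a, a \notin S -> attacks S [set a]) -> stable S.
Proof.
move=> cfS attS; split=> //; split=> // U attUS.
have [sUS | /subsetPn [b bU bS]] := boolP (U \subset S).
  by case: cfS; apply: attacks_mono attUS.
by apply: attacks_mono (attS b bS); rewrite ?sub1set.
Qed.

Lemma stable_complete S : stable S -> complete S.
Proof.
move=> [admS attS]; split=> // T defT; apply/subsetP => a aT.
apply/negPn/negP => /attS attSa; case: admS.1.
by apply: defT; apply: attacks_mono attSa; rewrite ?sub1set.
Qed.

Lemma stable_preferred S : stable S -> preferred S.
Proof.
move=> stS; split=> [|T [[cfT _] _] sST]; first exact: stable_complete.
apply/eqP; rewrite eqEsubset sST andbT; apply/subsetP => a aT.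
apply/negPn/negP => /stS.2 attSa; case: cfT.
by apply: attacks_mono attSa; rewrite ?sub1set.
Qed.

End AttackSemantics.

Section FlatDerivations.
Variable D : ABA.
Implicit Types (S T : {set asm D}) (q : sent D) (body : seq (sent D)).

Hypothesis rule_head_not_asm : forall h body b, rule h body -> asm_sent b <> h.
Hypothesis rule_body_asm : forall h body y, rule h body -> y \in body ->
  exists b, y = asm_sent b.

Lemma derives_rule S q : (forall b, asm_sent b <> q) -> derives S q ->
  exists2 body, rule q body & {subset body <= [seq asm_sent b | b in S]}.
Proof.
move=> q_not_asm [t [vt rt leavesS]].
case: vt rt leavesS => [|x|x ch body _ rqb chb vch] //= [Ex] leavesS; subst x.
  by have [b _ /q_not_asm] := (leavesS q).1 (ll_here _).
exists body => // y yb; have [b Eb] := rule_body_asm rqb yb; subst y.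
case: chb => [[E _]|[_ chb]]; first by rewrite E in yb.
have : Some (asm_sent b) \in map (@droot _) ch.
  by rewrite (perm_mem chb) map_f ?mem_undup.
case/InP/List.in_map_iff => c [rc cch].
have leaf_c : leaf_label c (asm_sent b).
  case: (vch c cch) rc => [|z|z ch' body' _ rzb _ _] //= [Ez].
    by rewrite -Ez; exact: ll_here.
  by case: (rule_head_not_asm rzb (esym Ez)).
have [b' b'S <-] := (leavesS _).1 (ll_child q cch leaf_c).
by apply/imageP; exists b'.
Qed.

Definition flat_tree q body : dtree (sent D) :=
  Nd q (if body is [::] then [:: Top] else map (fun y => Nd y [::]) (undup body)).

Lemma flat_tree_valid q body : rule q body -> valid_tree (flat_tree q body).
Proof.
move=> rqb; rewrite /flat_tree; case: body rqb => [|y0 body] rqb.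
  apply: (vt_node _ rqb) => //; first by left.
  by move=> c [<-|[]]; constructor.
apply: (vt_node _ rqb).
- exact: undup_map_nil.
- by right; split=> //; rewrite -map_comp; exact: perm_refl.
- by move=> c /List.in_map_iff [z [<- _]]; constructor.
Qed.

Lemma leaf_labelE (x y : sent D) (ch : seq (dtree (sent D))) :
  leaf_label (Nd x ch) y <->
  (ch = [::] /\ y = x) \/ exists2 c, List.In c ch & leaf_label c y.
Proof.
split=> [leaf_y | [[-> ->] | [c cch leaf_c]]]; last exact: ll_child cch leaf_c.
  by inversion leaf_y; [left | right; exists c].
exact: ll_here.
Qed.

Lemma leaf_label_flat_tree q body y :
  leaf_label (flat_tree q body) y <-> y \in body.
Proof.
rewrite /flat_tree leaf_labelE; case: body => [|y0 body]; split=> //.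
- by case=> [[]|[c [<-|[]] leaf_top]]; [discriminate | inversion leaf_top].
- case=> [[/undup_map_nil nnil _]|[c /List.in_map_iff [z [<- /InP zb]]]].
    by case: nnil.
  by case/leaf_labelE => [[_ ->]|[]]; rewrite -(mem_undup (y0 :: body)).
- move=> yb; right; exists (Nd y [::]); last exact: ll_here.
  by apply/List.in_map_iff; exists y; split=> //; apply/InP; rewrite mem_undup.
Qed.

Lemma rule_derives S q body : rule q body ->
  {subset body <= [seq asm_sent b | b in S]} ->
  exists2 S' : {set asm D}, S' \subset S & derives S' q.
Proof.
move=> rqb bodyS; exists [set b in S | asm_sent b \in body].
  by apply/subsetP => b; rewrite inE => /andP [].
exists (flat_tree q body); split=> [|//|y]; first exact: flat_tree_valid.
rewrite leaf_label_flat_tree; split=> [/[dup] yb /bodyS /imageP [b bS Eb] | [b]].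
  by exists b; rewrite // inE bS -Eb.
by rewrite inE => /andP [_ ?] <-.
Qed.

Hypothesis contrary_not_asm : forall a b : asm D, asm_sent b <> contrary a.

Lemma flat_attacksP S T : attacks S T <->
  exists2 a, a \in T & exists2 body, rule (contrary a) body &
    {subset body <= [seq asm_sent b | b in S]}.
Proof.
split=> [[S' [a [sS'S aT /(derives_rule (@contrary_not_asm a)) [body rab bodyS]]]]
        | [a aT [body rab /(rule_derives rab) [S' sS'S derS']]]].
  exists a => //; exists body => // y /bodyS /imageP [b bS' ->].
  by apply: image_f; apply: subsetP bS'.
by exists S', a.
Qed.

End FlatDerivations.

Section Dag.
Variable V : finType.
Local Notation A := (dag_asm V).
Local Notation DD := (D_dag V).
Implicit Types (S T : {set A}) (a b : A) (G : rel V).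

Lemma dag_rule_head h body : dag_rule h body -> exists a, h = inr a.
Proof.
case=> [[a [_ [_ _ -> _]]] | [x1 [rest [i [_ _ _ + _]]]]]; first by exists a.
by case: h => // a _; exists a.
Qed.

Lemma dag_rule_body h body y : dag_rule h body -> y \in body -> exists b, y = inl b.
Proof.
case=> [[_ [b [_ _ _ ->]]] | [x1 [rest [i [_ _ _ _ Ebody]]]]].
  by rewrite inE => /eqP ->; exists b.
move=> /(map_f (@code V)); rewrite Ebody => /mapP [j _].
by case: y => b //= _; exists b.
Qed.

Lemma dag_attacks_ruleP S T : attacks (D := DD) S T <->
  exists2 a, a \in T & exists2 body, dag_rule (inr a) body &
    {subset body <= [seq inl b | b in S]}.
Proof.
apply: (flat_attacksP (D := DD)) => [h body b /dag_rule_head [a ->] //||//].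
exact: dag_rule_body.
Qed.

Lemma graph_ofP S x y :
  reflect (exists2 a, a \in S & val a = inl (x, y)) (graph_of S x y).
Proof.
apply: (iffP existsP) => [[a /andP [aS /eqP Ea]]|[a aS Ea]]; exists a => //.
by rewrite aS Ea eqxx.
Qed.

Lemma graph_ofE S a x y : val a = inl (x, y) -> graph_of S x y = (a \in S).
Proof.
move=> Ea; apply/graph_ofP/idP => [[b bS Eb]|aS]; last by exists a.
by rewrite (val_inj (etrans Ea (esym Eb))).
Qed.

Lemma graph_of_neq S x y : graph_of S x y -> x != y.
Proof. by case/graph_ofP => a _ Ea; have := valP a; rewrite Ea. Qed.

Definition clashes S a := exists2 b, b \in S & b != a /\ pair_of b = pair_of a.

Definition closes_cycle S a :=
  a \in S /\ exists x y, val a = inl (x, y) /\ connect (graph_of S) y x.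

Lemma cycle_rule_closes S a body x1 rest i (s := x1 :: rest) :
  last x1 rest = x1 -> i.+1 < size s ->
  code (inr a : dag_sent V) = (true, inl (nth x1 s i, nth x1 s i.+1)) ->
  map (@code V) body =
    [seq (false, inl (nth x1 s j, nth x1 s j.+1)) | j <- iota 0 (size s).-1] ->
  {subset body <= [seq inl b | b in S]} -> closes_cycle S a.
Proof.
move=> s_closed is_ [Ea] Ebody bodyS.
have arc j : j.+1 < size s ->
    exists2 b, b \in S & val b = inl (nth x1 s j, nth x1 s j.+1).
  move=> js; have : (false, inl (nth x1 s j, nth x1 s j.+1)) \in map (@code V) body.
    by rewrite Ebody map_f // mem_iota leq0n.
  by case/mapP => _ /bodyS /imageP [b bS ->] [Eb]; exists b.
have edge j : j.+1 < size s -> graph_of S (nth x1 s j) (nth x1 s j.+1).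
  by case/arc => b bS Eb; apply/graph_ofP; exists b.
have [b bS Eb] := arc i is_.
split; first by rewrite (val_inj (etrans Ea (esym Eb))).
exists (nth x1 s i), (nth x1 s i.+1); split=> //.
have last_s : nth x1 s (size rest) = nth x1 s 0.
  by rewrite -[size rest]/((size s).-1) nth_last /= s_closed.
apply: (@connect_trans _ _ (nth x1 s (size rest))).
  by apply: (connect_nth edge); apply/andP; split; [exact: is_ | exact: ltnSn].
by rewrite last_s; apply: (connect_nth edge); rewrite leq0n ltnW.
Qed.

Lemma closes_cycle_rule S a : closes_cycle S a ->
  exists2 body, dag_rule (inr a) body & {subset body <= [seq inl b | b in S]}.
Proof.
move=> [aS [x [y [Ea /connectP [p ypath Ex]]]]].
pose s := x :: y :: p.
have edge : forall j, j.+1 < size s -> graph_of S (nth x s j) (nth x s j.+1).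
  have /(pathP x) xpath : path (graph_of S) x (y :: p).
    by rewrite /= ypath andbT (graph_ofE S Ea).
  exact: xpath.
pose arc j : A := odflt a (insub (inl (nth x s j, nth x s j.+1))).
have arcE j : j.+1 < size s ->
    arc j \in S /\ val (arc j) = inl (nth x s j, nth x s j.+1).
  by case/edge/graph_ofP => b bS Eb; rewrite /arc -Eb valK.
exists [seq inl (arc j) | j <- iota 0 (size s).-1].
  right; exists x, (y :: p), 0; split=> //.
  - by move=> j /edge /graph_of_neq.
  - by rewrite /= Ea.
  rewrite -map_comp; apply/eq_in_map => j; rewrite mem_iota => /andP [_ js] /=.
  by rewrite (arcE j js).2.
move=> z /mapP [j]; rewrite mem_iota => /andP [_ js] ->.
by rewrite image_f ?(arcE j js).1.
Qed.

Lemma dag_rule_supported S a body : dag_rule (inr a) body ->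
  {subset body <= [seq inl b | b in S]} -> clashes S a \/ closes_cycle S a.
Proof.
case=> [[a' [b [nab Epair [Ea'] Ebody]]] | [x1 [rest [i [s_closed _ is_ Ea Ebody]]]]].
  subst a' => bodyS; left.
  have /bodyS/imageP [b' b'S [Eb']] : inl b \in body by rewrite Ebody mem_head.
  by subst b'; exists b; rewrite // eq_sym.
by move=> bodyS; right; apply: cycle_rule_closes s_closed is_ Ea Ebody bodyS.
Qed.

Lemma dag_attacksP S T : attacks (D := DD) S T <->
  exists2 a, a \in T & clashes S a \/ closes_cycle S a.
Proof.
rewrite dag_attacks_ruleP.
split=> [[a aT [body rab bodyS]] | [a aT [clash | cycle]]].
- by exists a => //; apply: dag_rule_supported rab bodyS.
- have [b bS [nba Epair]] := clash; exists a => //; exists [:: inl b].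
    by left; exists a, b; rewrite eq_sym.
  by move=> z; rewrite inE => /eqP ->; apply: image_f.
- by exists a => //; apply: closes_cycle_rule.
Qed.

Definition covers_pairs S := forall a, exists2 b, b \in S & pair_of b = pair_of a.

Lemma conflict_free_dagP S : conflict_free (D := DD) S <->
  {in S &, injective (@pair_of V)} /\ acyclic (graph_of S).
Proof.
split=> [cfS | [pair_inj acyc]
        /dag_attacksP [a aS [[b bS [nba Epair]] | [_ [x [y [Ea yx]]]]]]].
- split=> [a b aS bS Epair | x y /graph_ofP [a aS Ea]].
    apply/eqP/negPn/negP => nab; apply: cfS; apply/dag_attacksP.
    by exists a => //; left; exists b; rewrite // eq_sym.
  apply/negP => yx; apply: cfS; apply/dag_attacksP.
  by exists a => //; right; split=> //; exists x, y.
- by move: nba; rewrite (pair_inj b a bS aS Epair) eqxx.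
- by move: (acyc x y); rewrite (graph_ofE S Ea) aS yx => /(_ isT).
Qed.

Lemma stable_dagP S : stable (D := DD) S <->
  [/\ {in S &, injective (@pair_of V)}, covers_pairs S & acyclic (graph_of S)].
Proof.
split=> [[[cfS _] attS] | [pair_inj cover acyc]].
  have [pair_inj acyc] := (conflict_free_dagP S).1 cfS; split=> // a.
  have [aS | naS] := boolP (a \in S); first by exists a.
  case/attS/dag_attacksP: (naS) => _ /set1P -> [[b bS [_ Epair]] | [aS _]].
    by exists b.
  by rewrite aS in naS.
apply: attacks_outside_stable => [|a naS]; first exact/conflict_free_dagP.
have [b bS Epair] := cover a; apply/dag_attacksP; exists a; rewrite ?set11 //.
by left; exists b => //; split=> //; apply: contraNneq naS => <-.
Qed.

Definition is_noe a := if val a is inr _ then true else false.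

Lemma noe_pair_inj a b : is_noe a -> is_noe b -> pair_of a = pair_of b -> a = b.
Proof.
rewrite /is_noe /pair_of => noe_a noe_b Epair.
apply: val_inj; move: noe_a noe_b Epair.
by case: (val a) (val b) => [//|e] [//|f] _ _ ->.
Qed.

Lemma card_pair_of a : #|pair_of a| == 2.
Proof. by case: a => [[[x y]|e] /= ok] //; rewrite /pair_of /= cards2 ok. Qed.

Definition noe_completion S :=
  S :|: [set a | is_noe a & [forall b in S, pair_of b != pair_of a]].

Lemma graph_of_noe_completion S : graph_of (noe_completion S) =2 graph_of S.
Proof.
move=> x y; apply/graph_ofP/graph_ofP => [[a] | [a aS Ea]]; last first.
  by exists a; rewrite ?inE ?aS.
rewrite !inE => /orP [aS Ea | /andP [noe_a _] Ea]; first by exists a.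
by move: noe_a; rewrite /is_noe Ea.
Qed.

Lemma noe_completion_pair_inj S : {in S &, injective (@pair_of V)} ->
  {in noe_completion S &, injective (@pair_of V)}.
Proof.
move=> pair_inj a b; rewrite !inE.
case/orP=> [aS | /andP [noe_a /forallP fresh_a]];
  case/orP=> [bS | /andP [noe_b /forallP fresh_b]] Epair.
- exact: pair_inj.
- by have := fresh_b a; rewrite aS Epair eqxx.
- by have := fresh_a b; rewrite bS Epair eqxx.
- exact: noe_pair_inj.
Qed.

Lemma noe_completion_covers S : covers_pairs (noe_completion S).
Proof.
move=> a; have [/existsP [b /andP [bS /eqP Epair]] | fresh] :=
  boolP [exists b in S, pair_of b == pair_of a].
  by exists b; rewrite ?inE ?bS.
exists (Sub (inr (pair_of a)) (card_pair_of a)) => //.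
rewrite inE; apply/orP; right; rewrite inE; apply/andP; split=> //.
apply/forallP => b; apply/implyP => bS.
by apply: contra fresh => Epair; apply/existsP; exists b; rewrite bS.
Qed.

Lemma noe_completion_stable S : {in S &, injective (@pair_of V)} ->
  acyclic (graph_of S) -> stable (D := DD) (noe_completion S).
Proof.
move=> pair_inj acyc; apply/stable_dagP; split.
- exact: noe_completion_pair_inj.
- exact: noe_completion_covers.
- by apply: eq_acyclic acyc => x y; rewrite graph_of_noe_completion.
Qed.

Lemma preferred_dag_stable S : preferred (D := DD) S -> stable (D := DD) S.
Proof.
move=> [[[cfS _] _] maxS]; have [pair_inj acyc] := (conflict_free_dagP S).1 cfS.
have stT := noe_completion_stable pair_inj acyc.
by rewrite -(maxS _ (stable_complete stT) (subsetUl _ _)).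
Qed.

Lemma extension_dagE sg S : extension (D := DD) sg S <-> stable (D := DD) S.
Proof.
case: sg => /=; split=> //; [exact: preferred_dag_stable | exact: stable_preferred].
Qed.

Lemma subset_of_graph S T : {in S &, injective (@pair_of V)} -> covers_pairs T ->
  graph_of S =2 graph_of T -> S \subset T.
Proof.
move=> pair_inj cover gST; apply/subsetP => a aS.
case Ea: (val a) => [[x y]|e].
  by rewrite -(graph_ofE T Ea) -gST (graph_ofE S Ea).
have [b bT Epair] := cover a; case Eb: (val b) => [[u v]|f].
  have bS : b \in S by rewrite -(graph_ofE S Eb) gST (graph_ofE T Eb).
  by rewrite (pair_inj a b aS bS (esym Epair)).
by rewrite (@noe_pair_inj a b) ?Epair ?/is_noe ?Ea ?Eb.
Qed.

Lemma stable_graph_inj S T : stable (D := DD) S -> stable (D := DD) T ->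
  graph_of S =2 graph_of T -> S = T.
Proof.
move=> /stable_dagP [injS coverS _] /stable_dagP [injT coverT _] gST.
apply/eqP; rewrite eqEsubset !subset_of_graph // => x y; exact/esym/gST.
Qed.

Definition arrows G : {set A} :=
  [set a | if val a is inl (x, y) then G x y else false].

Lemma graph_of_arrows G : irreflexive G -> graph_of (arrows G) =2 G.
Proof.
move=> irrG x y; apply/graph_ofP/idP => [[[[[u v]|e] ok]] | Gxy]; rewrite ?inE //=.
  by move=> Guv [<- <-].
have xy : x != y by apply: contraTneq Gxy => ->; rewrite irrG.
by exists (Sub (inl (x, y)) xy); rewrite ?inE.
Qed.

Lemma arrows_pair_inj G : acyclic G -> {in arrows G &, injective (@pair_of V)}.
Proof.
move=> acyc [[[x y]|e] xy] [[[u v]|f] uv]; rewrite !inE //= => Gxy Guv.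
rewrite /pair_of /= => Exy; apply: val_inj => /=.
have /set2P xuv : x \in [set u; v] by rewrite -Exy set21.
have /set2P yuv : y \in [set u; v] by rewrite -Exy set22.
case: xuv yuv xy Gxy => -> [] -> //=; rewrite ?eqxx // => _ Gvu.
by move: (acyc _ _ Gvu); rewrite connect1.
Qed.

Definition dag_ext G := noe_completion (arrows G).

Lemma graph_of_dag_ext G : acyclic G -> graph_of (dag_ext G) =2 G.
Proof.
move=> acyc x y; rewrite graph_of_noe_completion.
exact/graph_of_arrows/acyclic_irreflexive.
Qed.

Lemma dag_ext_stable G : acyclic G -> stable (D := DD) (dag_ext G).
Proof.
move=> acyc; apply: noe_completion_stable; first exact: arrows_pair_inj.
apply: (eq_acyclic _ acyc) => x y.
by rewrite graph_of_arrows //; apply: acyclic_irreflexive.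
Qed.

End Dag.

Theorem corollary1 (V : finType) (sg : semantics) :
  (forall G : rel V, acyclic G ->
     exists! S : {set asm (D_dag V)}, extension sg S /\ graph_of S =2 G)
  /\
  (forall S : {set asm (D_dag V)}, extension sg S -> acyclic (graph_of S)).
Proof.
split=> [G acyc | S /extension_dagE /stable_dagP []] //.
have gG := graph_of_dag_ext acyc; have stG := dag_ext_stable acyc.
exists (dag_ext G); split=> [|S [/extension_dagE stS gS]].
  by split=> //; apply/extension_dagE.
by apply: stable_graph_inj => // x y; rewrite gG gS.
Qed.
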